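(* Let $\kappa=7/8$ and $9/10<\alpha<1$. Define on $[-\pi,\pi]$ (extended $2\pi$-periodically) $\bar\omega_\alpha=\mathrm{sgn}(x)|\sin x|^\alpha$, $\bar u_\alpha=\mathrm{sgn}(x)|\sin x|^{(1+\alpha)/2}$, let $\bar\psi_\alpha$ be the odd $2\pi$-periodic solution of $-\bar\psi_\alpha''=\bar\omega_\alpha$, and set $\omega_{\mathrm{res}}=\bar\omega_\alpha-\sin x$, $u_{\mathrm{res}}=\bar u_\alpha-\sin x$, $\psi_{\mathrm{res}}=\bar\psi_\alpha-\sin x$. Then, with constants independent of $\alpha$: (1) $|\partial_x^i\omega_{\mathrm{res}}|+|\partial_x^iu_{\mathrm{res}}|\lesssim|\alpha-1|\,|\sin x|^{\kappa-i}$ for $i=0,1,2,3$, and $\|\psi_{\mathrm{res}}\|_{L^\infty}+\|\psi_{\mathrm{res},x}\|_{L^\infty}\lesssim|\alpha-1|$; (2) $\big|\tfrac{\alpha-1}{2}\bar u_{\alpha,x}-\sin x\,u_{\mathrm{res},xx}\big|+\big|\sin x\,\partial_x\big[\tfrac{\alpha-1}{2}\bar u_{\alpha,x}-\sin x\,u_{\mathrm{res},xx}\big]\big|\lesssim|\alpha-1|^{1/2}|x|\,|\sin x|^{\alpha-1}$ for $x\in[-\pi,\pi]\setminus\{0,\pm\pi\}$.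
   Context: Subscripts $x$ denote derivatives in $x$. *)

From Stdlib Require Import Reals Lra.
From Coquelicot Require Import Coquelicot.
Open Scope R_scope.

Definition kappa : R := 7 / 8.

Definition sgnpow (a y : R) : R :=
  if Rlt_dec 0 y then Rpower y a
  else if Rlt_dec y 0 then - Rpower (- y) a
  else 0.

(* omegabar_alpha = sgn(x)|sin x|^alpha on [-pi,pi], 2pi-periodically extended,
   i.e. sgn(sin x) |sin x|^alpha on all of R *)
Definition omegabar (alpha x : R) : R := sgnpow alpha (sin x).

Definition ubar (alpha x : R) : R := sgnpow ((1 + alpha) / 2) (sin x).

Definition omega_res (alpha x : R) : R := omegabar alpha x - sin x.
Definition u_res (alpha x : R) : R := ubar alpha x - sin x.

Definition is_psibar (alpha : R) (psi : R -> R) : Prop :=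
  (forall x, psi (- x) = - psi x) /\
  (forall x, psi (x + 2 * PI) = psi x) /\
  (forall x, ex_derive psi x) /\
  (forall x, is_derive (Derive psi) x (- omegabar alpha x)).

Definition gexpr (alpha x : R) : R :=
  (alpha - 1) / 2 * Derive (ubar alpha) x - sin x * Derive_n (u_res alpha) 2 x.

From Stdlib Require Import Reals Lra Lia.
From Coquelicot Require Import Coquelicot.
Open Scope R_scope.

(* Away from the zeros of [sin], write [s = sin x] and [P = |s|^(a-1)], so that
   [sgnpow a s - s = s (P - 1)]; its first three derivatives are explicit and every term
   carries a factor [1 - a], [P - 1] or [a P - 1].  Since [P - 1 <= (1 - a) ln(1/|s|) P], the
   logarithm is absorbed by the power [|s|^(-1/8)] left over between [kappa = 7/8] and [1].
   For [psi_res]: it solves [psi_res'' = - omega_res], which is [O(1 - alpha)]; oddness and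
   periodicity make [psi_res] vanish at [0] and [PI], so [psi_res'] has a zero in between and
   two mean-value estimates bound [psi_res'] and [psi_res].  In (2), with [b = (1 + alpha)/2]
   and [c = cos x], the combination simplifies to [b (b - 1) P c (1 - c) + s^2 (b P - 1)],
   and [1 - c], [s^2] are [O(|x|)]. *)

Lemma open_sin_neq0 : open (fun t => sin t <> 0).
Proof.
  intros y Hy.
  assert (Hc : filterlim sin (locally y) (locally (sin y)))
    by apply continuity_pt_filterlim, continuity_sin.
  apply (Hc (fun z => z <> 0)).
  assert (Hpos : 0 < Rabs (sin y)) by now apply Rabs_pos_lt.
  exists (mkposreal _ Hpos). intros z Hz Hz0.
  change (Rabs (z - sin y) < Rabs (sin y)) in Hz.
  rewrite Hz0, Rminus_0_l, Rabs_Ropp in Hz. lra.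
Qed.

Lemma Derive_n_on_open (U : R -> Prop) (f : R -> R) (F : nat -> R -> R) (n : nat) :
  open U -> (forall y, U y -> f y = F 0%nat y) ->
  (forall k y, (k < n)%nat -> U y -> is_derive (F k) y (F (S k) y)) ->
  forall k y, (k <= n)%nat -> U y -> Derive_n f k y = F k y.
Proof.
  intros HU Hf0 HF. induction k as [|k IHk]; intros y Hk Hy; [now apply Hf0|].
  simpl. rewrite (Derive_ext_loc _ (F k)).
  - apply is_derive_unique, HF; auto; lia.
  - apply (filter_imp U); [|now apply HU].
    intros t Ht. apply IHk; auto; lia.
Qed.

Lemma mean_value_bound (f f' : R -> R) (a b K : R) :
  (forall t, is_derive f t (f' t)) ->
  (forall t, Rmin a b <= t <= Rmax a b -> Rabs (f' t) <= K) ->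
  Rabs (f b - f a) <= K * Rabs (b - a).
Proof.
  intros Hf HK.
  destruct (MVT_gen f a b f') as (c & Hc & Hmvt).
  - intros t _. apply Hf.
  - intros t _. apply derivable_continuous_pt. exists (f' t). now apply is_derive_Reals.
  - rewrite Hmvt, Rabs_mult.
    apply Rmult_le_compat_r; [apply Rabs_pos | now apply HK].
Qed.

Lemma periodic_everywhere (Q : R -> Prop) (a p : R) : 0 < p ->
  (forall z, a <= z <= a + p -> Q z) -> (forall z, Q (z + p) <-> Q z) -> forall z, Q z.
Proof.
  intros Hp Hbase Hper.
  assert (Hn : forall n z, a - p * INR n <= z <= a + p + p * INR n -> Q z).
  { induction n as [|n IHn]; intros z Hz.
    - apply Hbase. simpl in Hz. lra.
    - rewrite S_INR in Hz. pose proof (pos_INR n).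
      destruct (Rlt_le_dec (a + p + p * INR n) z).
      + replace z with ((z - p) + p) by ring. apply Hper, IHn. nra.
      + destruct (Rlt_le_dec z (a - p * INR n)).
        * apply Hper, IHn. nra.
        * apply IHn. lra. }
  intros z. destruct (INR_archimed p (Rabs (z - a)) Hp) as [n Hlt].
  apply (Hn n). unfold Rabs in Hlt. destruct Rcase_abs in Hlt; lra.
Qed.

Lemma Rabs_sin_le z : Rabs (sin z) <= Rabs z.
Proof.
  pose proof (mean_value_bound sin cos 0 z 1) as Hmv.
  rewrite sin_0, !Rminus_0_r, Rmult_1_l in Hmv.
  apply Hmv; [intros t; auto_derive; auto; ring | intros t _; apply Rabs_le, COS_bound].
Qed.

Lemma one_sub_cos_le z : 0 <= 1 - cos z <= Rabs z.
Proof.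
  pose proof (mean_value_bound cos (fun t => - sin t) 0 z 1) as Hmv.
  rewrite cos_0, Rminus_0_r, Rmult_1_l, <- Rabs_Ropp, Ropp_minus_distr in Hmv.
  pose proof (COS_bound z). rewrite Rabs_pos_eq in Hmv by lra.
  split; [lra|]. apply Hmv; [intros t; auto_derive; auto; ring|].
  intros t _. rewrite Rabs_Ropp. apply Rabs_le, SIN_bound.
Qed.

Lemma sin_neq0_on_period x : - PI <= x <= PI -> x <> 0 -> x <> PI -> x <> - PI -> sin x <> 0.
Proof.
  intros Hx Hx0 HxPI HxmPI. destruct (Rtotal_order x 0) as [Hneg|[Hz|Hpos]].
  - assert (sin x < 0) by (apply sin_lt_0_var; lra). lra.
  - contradiction.
  - assert (0 < sin x) by (apply sin_gt_0; lra). lra.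
Qed.

Lemma exp_le_compat x y : x <= y -> exp x <= exp y.
Proof. intros [Hxy|Hxy]; [left; now apply exp_increasing | now subst]. Qed.

Lemma Rpower_small_exponent_bounds t e : 0 < t <= 1 -> 0 <= e <= 1/10 ->
  1 <= Rpower t (- e) <= Rpower t (- (1/8)) /\
  Rpower t (- e) - 1 <= 40 * e * Rpower t (- (1/8)) /\
  t * Rpower t (- (1/8)) <= 1.
Proof.
  intros Ht He. unfold Rpower.
  assert (Hm : 0 <= - ln t).
  { assert (ln t <= ln 1) by (apply ln_le; lra). rewrite ln_1 in *. lra. }
  set (m := - ln t) in *. replace (ln t) with (- m) by (unfold m; ring).
  replace (- e * - m) with (e * m) by ring.
  replace (- (1/8) * - m) with (m / 8) by field.
  assert (Hexp : exp (e * m) <= exp (m / 10)) by (apply exp_le_compat; nra).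
  assert (Hinv : exp (- (e * m)) * exp (e * m) = 1)
    by (rewrite <- exp_plus, <- exp_0; f_equal; ring).
  assert (Hsplit : exp (m / 8) = exp (m / 40) * exp (m / 10))
    by (rewrite <- exp_plus; f_equal; field).
  pose proof (exp_ineq1_le (- (e * m))). pose proof (exp_ineq1_le (m / 40)).
  pose proof (exp_pos (m / 10)).
  assert (1 <= exp (e * m)) by (rewrite <- exp_0; apply exp_le_compat; nra).
  assert (1 <= exp (m / 40)) by (rewrite <- exp_0; apply exp_le_compat; lra).
  repeat split.
  - auto.
  - apply exp_le_compat; nra.
  - assert (exp (e * m) - 1 <= e * m * exp (e * m)) by nra.
    assert (m * exp (e * m) <= 40 * exp (m / 8)) by nra.
    nra.
  - replace t with (exp (- m)) by (unfold m; rewrite Ropp_involutive; now apply exp_ln).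
    rewrite <- exp_plus, <- exp_0. apply exp_le_compat. lra.
Qed.

Lemma Rabs_mult_le u v U V : Rabs u <= U -> Rabs v <= V -> Rabs (u * v) <= U * V.
Proof. intros. rewrite Rabs_mult. apply Rmult_le_compat; auto; apply Rabs_pos. Qed.

(* [abspow a s] is [|s|^a] for [s <> 0], written through [ln (s ^ 2)] so that [auto_derive]
   differentiates it without a case split on the sign of [s]. *)
Definition abspow (a s : R) : R := exp (a * (ln (s ^ 2) / 2)).

Lemma abspow_Rpower a s : s <> 0 -> abspow a s = Rpower (Rabs s) a.
Proof.
  intros Hs. unfold abspow, Rpower.
  rewrite <- pow2_abs, ln_pow by now apply Rabs_pos_lt.
  f_equal. simpl. field.
Qed.

Lemma sgnpow_abspow a s : s <> 0 -> sgnpow a s = s * abspow (a - 1) s.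
Proof.
  intros Hs. rewrite abspow_Rpower by auto. unfold sgnpow.
  assert (Hpow : forall t, 0 < t -> Rpower t a = t * Rpower t (a - 1)).
  { intros t Ht. rewrite <- (Rpower_1 t) at 2 by auto.
    rewrite <- Rpower_plus. f_equal. ring. }
  destruct (Rlt_dec 0 s) as [Hpos|Hpos].
  - rewrite Rabs_pos_eq by lra. now apply Hpow.
  - destruct (Rlt_dec s 0) as [Hneg|Hneg]; [|lra].
    rewrite Rabs_left, Hpow by lra. ring.
Qed.

Lemma abspow_scales a s : 9/10 <= a <= 1 -> s <> 0 -> Rabs s <= 1 ->
  1 <= abspow (a - 1) s <= Rpower (Rabs s) (- (1/8)) /\
  abspow (a - 1) s - 1 <= 40 * (1 - a) * Rpower (Rabs s) (- (1/8)) /\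
  Rabs s * Rpower (Rabs s) (- (1/8)) <= 1.
Proof.
  intros Ha Hs Hs1. rewrite abspow_Rpower by auto.
  replace (a - 1) with (- (1 - a)) by ring.
  apply Rpower_small_exponent_bounds; [split; [now apply Rabs_pos_lt | auto] | lra].
Qed.

Definition res_deriv (a : R) (n : nat) (y : R) : R :=
  let s := sin y in let c := cos y in let P := abspow (a - 1) s in
  match n with
  | O => s * P - s
  | 1%nat => a * c * P - c
  | 2%nat => a * (a - 1) * P * c ^ 2 / s - a * s * P + s
  | _ => a * (a - 1) * (a - 2) * P * c ^ 3 / s ^ 2 - a * (3 * a - 2) * c * P + c
  end.

Ltac derive_abspow :=
  cbv beta iota zeta delta [abspow];
  (* naming the [exp] factor keeps [field] from normalising inside it *)
  auto_derive; [repeat split; auto; nra | set (E := exp _); field; auto].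

Lemma is_derive_res_deriv a k y : (k < 3)%nat -> sin y <> 0 ->
  is_derive (res_deriv a k) y (res_deriv a (S k) y).
Proof.
  intros Hk Hy. unfold res_deriv.
  destruct k as [|[|[|k]]]; [derive_abspow.. | lia].
Qed.

Lemma Derive_n_sgnpow_sin_sub a k y : (k <= 3)%nat -> sin y <> 0 ->
  Derive_n (fun x => sgnpow a (sin x) - sin x) k y = res_deriv a k y.
Proof.
  apply (Derive_n_on_open _ _ _ 3 open_sin_neq0).
  - intros t Ht. simpl. now rewrite sgnpow_abspow.
  - intros j t Hj Ht. now apply is_derive_res_deriv.
Qed.

Section ResidualBounds.

(* [P] stands for [|s|^(a-1)] and [w] for [|s|^(-1/8)], related as in [abspow_scales]. *)
Variables (a s c P w : R).
Hypotheses (Ha : 9/10 <= a <= 1) (Hs1 : Rabs s <= 1) (Hc : Rabs c <= 1)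
  (HP : 1 <= P <= w) (HP1 : P - 1 <= 40 * (1 - a) * w) (Hsw : Rabs s * w <= 1).

Lemma cos_sq_le1 : c ^ 2 <= 1.
Proof. rewrite <- pow2_abs. pose proof (Rabs_pos c). nra. Qed.

Lemma scaled_dev_bound : Rabs (a * P - 1) <= 41 * (1 - a) * w.
Proof. apply Rabs_le. nra. Qed.

Lemma res_deriv0_bound : Rabs (s * P - s) <= 50 * (1 - a) * (w * Rabs s).
Proof.
  replace (s * P - s) with (s * (P - 1)) by ring.
  rewrite Rabs_mult, (Rabs_pos_eq (P - 1)) by lra.
  pose proof (Rabs_pos s). nra.
Qed.

Lemma res_deriv1_bound : Rabs (a * c * P - c) <= 50 * (1 - a) * w.
Proof.
  replace (a * c * P - c) with (c * (a * P - 1)) by ring.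
  pose proof (Rabs_mult_le _ _ _ _ Hc scaled_dev_bound). nra.
Qed.

Lemma sin_sq_dev_bound x : Rabs s <= Rabs x -> Rabs (s ^ 2 * (a * P - 1)) <= 41 * (1 - a) * Rabs x.
Proof.
  intros Hsx. rewrite Rabs_mult, <- RPow_abs.
  pose proof scaled_dev_bound. pose proof (Rabs_pos s). pose proof (Rabs_pos (a * P - 1)).
  assert (Rabs s ^ 2 * Rabs (a * P - 1) <= (41 * (1 - a) * Rabs s) * (Rabs s * w)) by nra.
  assert (0 <= 41 * (1 - a) * Rabs s) by nra.
  assert ((41 * (1 - a) * Rabs s) * (Rabs s * w) <= 41 * (1 - a) * Rabs s) by nra.
  nra.
Qed.

Lemma sin_sq_le x : Rabs s <= Rabs x -> s ^ 2 <= Rabs x.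
Proof. intros Hsx. rewrite <- pow2_abs. pose proof (Rabs_pos s). nra. Qed.

Lemma gexpr_smooth_terms_bound x : Rabs s <= Rabs x -> 0 <= 1 - c <= Rabs x ->
  Rabs (a * (a - 1) * P * c * (1 - c) + s ^ 2 * (a * P - 1))
  <= (1 - a) * P * Rabs x + 41 * (1 - a) * Rabs x.
Proof.
  intros Hsx Hcx. eapply Rle_trans; [apply Rabs_triang|].
  apply Rplus_le_compat; [|now apply sin_sq_dev_bound].
  replace (a * (a - 1) * P * c * (1 - c)) with (((1 - a) * P) * (- a * c * (1 - c))) by ring.
  apply Rabs_mult_le; [rewrite Rabs_pos_eq; nra|].
  assert (-1 <= a * c <= 1) by (apply Rabs_le_between in Hc; split; nra).
  assert (0 <= (1 + a * c) * (1 - c)) by (apply Rmult_le_pos; lra).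
  assert (0 <= (1 - a * c) * (1 - c)) by (apply Rmult_le_pos; lra).
  apply Rabs_le. split; nra.
Qed.

Lemma sin_mul_dgexpr_terms_bound x : Rabs s <= Rabs x -> 0 <= 1 - c <= Rabs x ->
  Rabs (a * (a - 1) ^ 2 * P * c ^ 2 * (1 - c) + a * (a - 1) * P * s ^ 2 * (2 * c - 1)
        + 2 * s ^ 2 * c * (a * P - 1) + a * (a - 1) * s ^ 2 * P * c)
  <= 5 * (1 - a) * P * Rabs x + 82 * (1 - a) * Rabs x.
Proof.
  intros Hsx Hcx.
  pose proof (sin_sq_le x Hsx). pose proof cos_sq_le1. pose proof (pow2_ge_0 c).
  assert (Hc1 : -1 <= c <= 1) by now apply Rabs_le_between.
  assert (HaP : Rabs ((1 - a) * P) <= (1 - a) * P) by (rewrite Rabs_pos_eq; nra).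
  assert (Tb : Rabs (a * (a - 1) ^ 2 * P * c ^ 2 * (1 - c)) <= (1 - a) * P * Rabs x).
  { replace (a * (a - 1) ^ 2 * P * c ^ 2 * (1 - c))
      with (((1 - a) * P) * (a * (1 - a) * c ^ 2 * (1 - c))) by ring.
    apply Rabs_mult_le; auto.
    assert (0 <= a * (1 - a) * c ^ 2 <= 1) by (split; [apply Rmult_le_pos|]; nra).
    apply Rabs_le. split; nra. }
  assert (Tc : Rabs (a * (a - 1) * P * s ^ 2 * (2 * c - 1)) <= (1 - a) * P * (3 * Rabs x)).
  { replace (a * (a - 1) * P * s ^ 2 * (2 * c - 1))
      with (((1 - a) * P) * ((- a * (2 * c - 1)) * s ^ 2)) by ring.
    apply Rabs_mult_le; auto.
    apply Rabs_mult_le; [apply Rabs_le; split; nra | rewrite Rabs_pos_eq by apply pow2_ge_0; assumption]. }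
  assert (Td : Rabs (2 * s ^ 2 * c * (a * P - 1)) <= 2 * (41 * (1 - a) * Rabs x)).
  { replace (2 * s ^ 2 * c * (a * P - 1)) with ((2 * c) * (s ^ 2 * (a * P - 1))) by ring.
    apply Rabs_mult_le; [apply Rabs_le; lra | now apply sin_sq_dev_bound]. }
  assert (Tf : Rabs (a * (a - 1) * s ^ 2 * P * c) <= (1 - a) * P * Rabs x).
  { replace (a * (a - 1) * s ^ 2 * P * c) with (((1 - a) * P) * ((- a * c) * s ^ 2)) by ring.
    replace ((1 - a) * P * Rabs x) with ((1 - a) * P * (1 * Rabs x)) by ring.
    apply Rabs_mult_le; auto.
    apply Rabs_mult_le; [apply Rabs_le; split; nra | rewrite Rabs_pos_eq by apply pow2_ge_0; assumption]. }
  set (A := a * (a - 1) ^ 2 * P * c ^ 2 * (1 - c)) in *.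
  set (B := a * (a - 1) * P * s ^ 2 * (2 * c - 1)) in *.
  set (D := 2 * s ^ 2 * c * (a * P - 1)) in *.
  set (E := a * (a - 1) * s ^ 2 * P * c) in *.
  pose proof (Rabs_triang (A + B + D) E). pose proof (Rabs_triang (A + B) D).
  pose proof (Rabs_triang A B). lra.
Qed.

Hypothesis Hs0 : s <> 0.

Lemma Rabs_inv_ge1 : 1 <= / Rabs s.
Proof.
  pose proof (Rabs_pos_lt s Hs0).
  rewrite <- Rinv_1. apply Rinv_le_contravar; lra.
Qed.

Lemma res_deriv2_bound :
  Rabs (a * (a - 1) * P * c ^ 2 / s - a * s * P + s) <= 50 * (1 - a) * (w / Rabs s).
Proof.
  replace (a * (a - 1) * P * c ^ 2 / s - a * s * P + s)
    with ((a * (a - 1) * P * c ^ 2) * / s + (- s) * (a * P - 1)) by (field; auto).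
  assert (Hlead : Rabs (a * (a - 1) * P * c ^ 2) <= (1 - a) * w).
  { pose proof cos_sq_le1. pose proof (pow2_ge_0 c).
    assert (0 <= a * (1 - a) <= 1 - a) by nra.
    assert (0 <= P * c ^ 2 <= w) by nra.
    assert (a * (1 - a) * (P * c ^ 2) <= (1 - a) * w) by (apply Rmult_le_compat; lra).
    assert (0 <= a * (1 - a) * (P * c ^ 2)) by (apply Rmult_le_pos; lra).
    apply Rabs_le. split; nra. }
  pose proof (Rabs_mult_le _ _ _ _ Hlead (Rle_refl (Rabs (/ s)))) as Hfirst.
  pose proof (Rabs_mult_le _ _ _ _ (Rle_refl (Rabs (- s))) scaled_dev_bound) as Hsecond.
  pose proof (Rabs_triang ((a * (a - 1) * P * c ^ 2) * / s) ((- s) * (a * P - 1))).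
  rewrite Rabs_inv in Hfirst. rewrite Rabs_Ropp in Hsecond. pose proof Rabs_inv_ge1.
  unfold Rdiv. nra.
Qed.

Lemma res_deriv3_bound :
  Rabs (a * (a - 1) * (a - 2) * P * c ^ 3 / s ^ 2 - a * (3 * a - 2) * c * P + c)
  <= 50 * (1 - a) * (w / Rabs s ^ 2).
Proof.
  replace (a * (a - 1) * (a - 2) * P * c ^ 3 / s ^ 2 - a * (3 * a - 2) * c * P + c)
    with ((a * (a - 1) * (a - 2) * P * c) * c ^ 2 * (/ s * / s)
          + (- c) * (a * (3 * a - 2) * P - 1)) by (field; auto).
  assert (Hlead : Rabs (a * (a - 1) * (a - 2) * P * c) <= (1 - a) * w).
  { assert (0 <= (1 - a) ^ 3) by (apply pow_le; lra).
    assert (0 <= a * (1 - a) * (2 - a) <= 1 - a) by (split; [apply Rmult_le_pos|]; nra).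
    assert (a * (1 - a) * (2 - a) * P <= (1 - a) * w) by (apply Rmult_le_compat; lra).
    assert (0 <= a * (1 - a) * (2 - a) * P) by (apply Rmult_le_pos; lra).
    replace ((1 - a) * w) with ((1 - a) * w * 1) by ring.
    apply Rabs_mult_le; [apply Rabs_le; split; nra | auto]. }
  assert (Hdev : Rabs (a * (3 * a - 2) * P - 1) <= 44 * (1 - a) * w).
  { replace (a * (3 * a - 2) * P - 1)
      with (a * (3 * a - 2) * (P - 1) - (1 - a) * (3 * a + 1)) by ring.
    assert (0 <= a * (3 * a - 2) <= 1) by nra.
    assert (0 <= a * (3 * a - 2) * (P - 1) <= P - 1) by (split; nra).
    apply Rabs_le. split; nra. }
  pose proof cos_sq_le1. pose proof Rabs_inv_ge1.
  assert (Hc2 : Rabs (c ^ 2) <= 1) by (rewrite Rabs_pos_eq; nra).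
  pose proof (Rabs_mult_le _ _ _ _ (Rabs_mult_le _ _ _ _ Hlead Hc2)
                (Rle_refl (Rabs (/ s * / s)))) as Hfirst.
  pose proof (Rabs_mult_le _ _ _ _ (Rle_refl (Rabs (- c))) Hdev) as Hsecond.
  pose proof (Rabs_triang ((a * (a - 1) * (a - 2) * P * c) * c ^ 2 * (/ s * / s))
                          ((- c) * (a * (3 * a - 2) * P - 1))).
  rewrite (Rabs_mult (/ s) (/ s)), Rabs_inv in Hfirst. rewrite Rabs_Ropp in Hsecond.
  replace (w / Rabs s ^ 2) with (w * (/ Rabs s * / Rabs s)) by (field; now apply Rabs_no_R0).
  assert (1 <= / Rabs s * / Rabs s) by nra.
  nra.
Qed.

End ResidualBounds.

Lemma res_deriv_bound a x i : 9/10 <= a <= 1 -> sin x <> 0 -> (i <= 3)%nat ->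
  Rabs (res_deriv a i x) <= 50 * (1 - a) * Rpower (Rabs (sin x)) (kappa - INR i).
Proof.
  intros Ha Hs Hi.
  assert (Hs1 : Rabs (sin x) <= 1) by (apply Rabs_le, SIN_bound).
  assert (Hc : Rabs (cos x) <= 1) by (apply Rabs_le, COS_bound).
  assert (Ht : 0 < Rabs (sin x)) by now apply Rabs_pos_lt.
  destruct (abspow_scales a (sin x)) as (HP & HP1 & Hsw); auto.
  replace (kappa - INR i) with (- (1/8) + (1 - INR i)) by (unfold kappa; field).
  rewrite Rpower_plus.
  destruct i as [|[|[|[|i]]]]; cbv zeta iota beta delta [res_deriv]; [..|lia].
  - replace (1 - INR 0) with 1 by (simpl; ring). rewrite Rpower_1 by auto.
    now apply res_deriv0_bound.
  - replace (1 - INR 1) with 0 by (simpl; ring). rewrite Rpower_O, Rmult_1_r by auto.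
    now apply res_deriv1_bound.
  - replace (1 - INR 2) with (- (1)) by (simpl; ring). rewrite (Rpower_Ropp _ 1), Rpower_1 by auto.
    now apply res_deriv2_bound.
  - replace (1 - INR 3) with (- INR 2) by (simpl; ring).
    rewrite (Rpower_Ropp _ (INR 2)), Rpower_pow by auto.
    now apply res_deriv3_bound.
Qed.

Lemma sgnpow_sin_sub_bound a y : 9/10 <= a <= 1 ->
  Rabs (sgnpow a (sin y) - sin y) <= 50 * (1 - a).
Proof.
  intros Ha. destruct (Req_dec (sin y) 0) as [Hs|Hs].
  - rewrite Hs. unfold sgnpow.
    destruct (Rlt_dec 0 0); [lra|]. destruct (Rlt_dec 0 0); [lra|].
    rewrite Rminus_0_r, Rabs_R0. lra.
  - rewrite sgnpow_abspow by auto.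
    assert (Hs1 : Rabs (sin y) <= 1) by (apply Rabs_le, SIN_bound).
    destruct (abspow_scales a (sin y)) as (HP & HP1 & Hsw); auto.
    assert (Hb : Rabs (sin y * abspow (a - 1) (sin y) - sin y)
                 <= 50 * (1 - a) * (Rpower (Rabs (sin y)) (- (1/8)) * Rabs (sin y)))
      by (apply res_deriv0_bound; auto).
    rewrite Rmult_comm in Hsw. nra.
Qed.

Section PsiResidual.

Variables (a : R) (psi : R -> R).
Hypotheses (Ha : 9/10 <= a <= 1) (Hpsi : is_psibar a psi).

Lemma is_derive_psi_res t : is_derive (fun x => psi x - sin x) t (Derive psi t - cos t).
Proof.
  destruct Hpsi as (_ & _ & Hex & _).
  apply (is_derive_minus psi sin); [now apply Derive_correct | auto_derive; auto; ring].
Qed.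

Lemma is_derive_Derive_psi_res t :
  is_derive (fun x => Derive psi x - cos x) t (- (sgnpow a (sin t) - sin t)).
Proof.
  destruct Hpsi as (_ & _ & _ & Hd2).
  replace (- (sgnpow a (sin t) - sin t)) with (- omegabar a t - - sin t)
    by (unfold omegabar; ring).
  apply (is_derive_minus (Derive psi) cos); [apply Hd2 | auto_derive; auto; ring].
Qed.

Lemma psi_res_periodic z : psi (z + 2 * PI) - sin (z + 2 * PI) = psi z - sin z.
Proof.
  destruct Hpsi as (_ & Hper & _). rewrite Hper, sin_plus, sin_2PI, cos_2PI. ring.
Qed.

Lemma Derive_psi_res_periodic z :
  Derive psi (z + 2 * PI) - cos (z + 2 * PI) = Derive psi z - cos z.
Proof.
  destruct Hpsi as (_ & Hper & _).
  rewrite cos_plus, sin_2PI, cos_2PI.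
  change (Derive psi (z + 2 * PI)) with (Derive_n psi 1 (z + 2 * PI)).
  rewrite <- Derive_n_comp_trans. simpl.
  rewrite (Derive_ext (fun y => psi (y + 2 * PI)) psi) by apply Hper. ring.
Qed.

Lemma psi_0 : psi 0 = 0.
Proof.
  destruct Hpsi as (Hodd & _). pose proof (Hodd 0) as E. rewrite Ropp_0 in E. lra.
Qed.

Lemma psi_PI : psi PI = 0.
Proof.
  destruct Hpsi as (Hodd & Hper & _).
  pose proof (Hper (- PI)) as E. replace (- PI + 2 * PI) with PI in E by ring.
  rewrite Hodd in E. lra.
Qed.

Lemma Derive_psi_res_root : exists c, 0 <= c <= PI /\ Derive psi c - cos c = 0.
Proof.
  pose proof PI_RGT_0.
  destruct (MVT_gen (fun x => psi x - sin x) 0 PI (fun x => Derive psi x - cos x))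
    as (c & Hc & Hmvt).
  - intros t _. apply is_derive_psi_res.
  - intros t _. apply derivable_continuous_pt. exists (Derive psi t - cos t).
    apply is_derive_Reals, is_derive_psi_res.
  - rewrite Rmin_left, Rmax_right in Hc by lra. exists c. split; auto.
    rewrite psi_0, psi_PI, sin_0, sin_PI, !Rminus_0_r in Hmvt. symmetry in Hmvt.
    apply Rmult_integral in Hmvt as [|]; lra.
Qed.

Lemma psi_res_bound_on_period z : - PI <= z <= PI ->
  Rabs (psi z - sin z) <= 32 * (50 * (1 - a)) /\
  Rabs (Derive psi z - cos z) <= 8 * (50 * (1 - a)).
Proof.
  intros Hz. pose proof PI_RGT_0. pose proof PI_4.
  assert (Hw : forall t, Rabs (- (sgnpow a (sin t) - sin t)) <= 50 * (1 - a))
    by (intros t; rewrite Rabs_Ropp; now apply sgnpow_sin_sub_bound).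
  destruct Derive_psi_res_root as (c & Hc & Hc0).
  assert (Hd : forall t, - PI <= t <= PI ->
                 Rabs (Derive psi t - cos t) <= 8 * (50 * (1 - a))).
  { intros t Ht.
    assert (Hmv := mean_value_bound _ _ c t _ is_derive_Derive_psi_res (fun s _ => Hw s)).
    cbv beta in Hmv. rewrite Hc0, Rminus_0_r in Hmv.
    assert (Rabs (t - c) <= 8) by (apply Rabs_le; lra).
    pose proof (Rabs_pos (t - c)). nra. }
  split; [|now apply Hd].
  assert (Hmv : Rabs ((psi z - sin z) - (psi 0 - sin 0)) <= 8 * (50 * (1 - a)) * Rabs (z - 0)).
  { apply (mean_value_bound _ _ 0 z _ is_derive_psi_res).
    intros t Ht. apply Hd.
    pose proof (Rmin_l 0 z). pose proof (Rmin_r 0 z).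
    pose proof (Rmax_l 0 z). pose proof (Rmax_r 0 z).
    unfold Rmin, Rmax in *. destruct Rle_dec; lra. }
  rewrite psi_0, sin_0, !Rminus_0_r in Hmv.
  assert (Rabs z <= 4) by (apply Rabs_le; lra).
  pose proof (Rabs_pos z). nra.
Qed.

End PsiResidual.

Lemma psi_res_bound a psi : 9/10 <= a <= 1 -> is_psibar a psi -> forall x y,
  Rabs (psi x - sin x) + Rabs (Derive (fun t => psi t - sin t) y) <= 2000 * (1 - a).
Proof.
  intros Ha Hpsi x y.
  assert (Hall : forall z, Rabs (psi z - sin z) <= 32 * (50 * (1 - a)) /\
                           Rabs (Derive psi z - cos z) <= 8 * (50 * (1 - a))).
  { apply (periodic_everywhere _ (- PI) (2 * PI)).
    - pose proof PI_RGT_0. lra.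
    - intros z Hz. apply psi_res_bound_on_period; auto. lra.
    - intros z. rewrite (psi_res_periodic a psi Hpsi), (Derive_psi_res_periodic a psi Hpsi).
      tauto. }
  replace (Derive (fun t => psi t - sin t) y) with (Derive psi y - cos y)
    by (symmetry; apply is_derive_unique, (is_derive_psi_res a); auto).
  destruct (Hall x), (Hall y). lra.
Qed.

Definition gexpr_smooth (al y : R) : R :=
  let b := (1 + al) / 2 in let s := sin y in let c := cos y in let P := abspow (b - 1) s in
  b * (b - 1) * P * c * (1 - c) + s ^ 2 * (b * P - 1).

Definition sin_mul_dgexpr (al y : R) : R :=
  let b := (1 + al) / 2 in let s := sin y in let c := cos y in let P := abspow (b - 1) s in
  b * (b - 1) ^ 2 * P * c ^ 2 * (1 - c) + b * (b - 1) * P * s ^ 2 * (2 * c - 1)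
  + 2 * s ^ 2 * c * (b * P - 1) + b * (b - 1) * s ^ 2 * P * c.

Lemma sgnpow_sin_locally b y : sin y <> 0 ->
  locally y (fun t => sgnpow b (sin t) = sin t * abspow (b - 1) (sin t)).
Proof.
  intros Hy. apply (filter_imp (fun t => sin t <> 0)); [|now apply open_sin_neq0].
  intros t Ht. now apply sgnpow_abspow.
Qed.

Lemma Derive_sgnpow_sin b y : sin y <> 0 ->
  Derive (fun x => sgnpow b (sin x)) y = b * cos y * abspow (b - 1) (sin y).
Proof.
  intros Hy. rewrite (Derive_ext_loc _ (fun t => sin t * abspow (b - 1) (sin t)))
    by now apply sgnpow_sin_locally.
  apply is_derive_unique. derive_abspow.
Qed.

Lemma gexpr_eq_smooth al y : sin y <> 0 -> gexpr al y = gexpr_smooth al y.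
Proof.
  intros Hy. unfold gexpr, u_res, ubar.
  rewrite Derive_sgnpow_sin, (Derive_n_sgnpow_sin_sub _ 2) by (auto; lia).
  cbv beta iota zeta delta [res_deriv gexpr_smooth]. field. auto.
Qed.

Lemma sin_mul_Derive_gexpr al y : sin y <> 0 -> sin y * Derive (gexpr al) y = sin_mul_dgexpr al y.
Proof.
  intros Hy. rewrite (Derive_ext_loc _ (gexpr_smooth al)).
  - rewrite (is_derive_unique _ _ (sin_mul_dgexpr al y / sin y)); [field; auto|].
    unfold gexpr_smooth, sin_mul_dgexpr. derive_abspow.
  - apply (filter_imp (fun t => sin t <> 0)); [|now apply open_sin_neq0].
    intros t Ht. now apply gexpr_eq_smooth.
Qed.

Lemma gexpr_bound al x : 9/10 < al < 1 -> sin x <> 0 ->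
  Rabs (gexpr al x) + Rabs (sin x * Derive (gexpr al) x)
  <= 100 * sqrt (Rabs (al - 1)) * Rabs x * Rpower (Rabs (sin x)) (al - 1).
Proof.
  intros Hal Hs.
  rewrite gexpr_eq_smooth, sin_mul_Derive_gexpr by auto.
  unfold gexpr_smooth, sin_mul_dgexpr. cbv zeta.
  set (b := (1 + al) / 2).
  assert (Hs1 : Rabs (sin x) <= 1) by (apply Rabs_le, SIN_bound).
  assert (Hc : Rabs (cos x) <= 1) by (apply Rabs_le, COS_bound).
  destruct (abspow_scales b (sin x)) as (HP & HP1 & Hsw); auto; [unfold b; lra|].
  pose proof (Rabs_sin_le x). pose proof (one_sub_cos_le x).
  eapply Rle_trans.
  { apply Rplus_le_compat;
      [apply gexpr_smooth_terms_bound with (w := Rpower (Rabs (sin x)) (- (1 / 8))) (x := x) |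
       apply sin_mul_dgexpr_terms_bound with (w := Rpower (Rabs (sin x)) (- (1 / 8))) (x := x)];
      auto; unfold b; lra. }
  set (P := abspow (b - 1) (sin x)) in *.
  assert (HP2 : P * P = Rpower (Rabs (sin x)) (al - 1)).
  { unfold P. rewrite abspow_Rpower, <- Rpower_plus by auto. f_equal. unfold b. field. }
  rewrite <- HP2, (Rabs_left1 (al - 1)), Ropp_minus_distr by lra.
  assert (Hsq : 1 - al <= sqrt (1 - al)).
  { rewrite <- (sqrt_pow2 (1 - al)) at 1 by lra. apply sqrt_le_1; nra. }
  replace (1 - b) with ((1 - al) / 2) by (unfold b; field).
  pose proof (Rabs_pos x).
  assert (0 <= Rabs x * P) by nra.
  assert (Rabs x <= Rabs x * P) by nra.
  assert (Rabs x * P <= Rabs x * (P * P)) by nra.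
  assert ((1 - al) * (Rabs x * P) <= sqrt (1 - al) * (Rabs x * P))
    by (apply Rmult_le_compat_r; lra).
  nra.
Qed.

Theorem mainTheorem14 :
  exists C : R, 0 < C /\
  forall alpha : R, 9 / 10 < alpha < 1 ->
    (forall (i : nat) (x : R), (i <= 3)%nat -> sin x <> 0 ->
       Rabs (Derive_n (omega_res alpha) i x) + Rabs (Derive_n (u_res alpha) i x)
       <= C * Rabs (alpha - 1) * Rpower (Rabs (sin x)) (kappa - INR i)) /\
    (forall psi : R -> R, is_psibar alpha psi ->
       forall x y : R,
         Rabs (psi x - sin x) + Rabs (Derive (fun t => psi t - sin t) y)
         <= C * Rabs (alpha - 1)) /\
    (forall x : R, - PI <= x <= PI -> x <> 0 -> x <> PI -> x <> - PI ->
       Rabs (gexpr alpha x) + Rabs (sin x * Derive (gexpr alpha) x)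
       <= C * sqrt (Rabs (alpha - 1)) * Rabs x * Rpower (Rabs (sin x)) (alpha - 1)).
Proof.
  exists 2000. split; [lra|]. intros alpha Ha.
  assert (Habs : Rabs (alpha - 1) = 1 - alpha) by (rewrite Rabs_left1; lra).
  split; [|split].
  - intros i x Hi Hs. unfold omega_res, omegabar, u_res, ubar.
    rewrite !Derive_n_sgnpow_sin_sub, Habs by auto.
    pose proof (res_deriv_bound alpha x i ltac:(lra) Hs Hi) as Homega.
    pose proof (res_deriv_bound ((1 + alpha) / 2) x i ltac:(lra) Hs Hi) as Hu.
    assert (0 <= Rpower (Rabs (sin x)) (kappa - INR i)) by (left; apply exp_pos).
    nra.
  - intros psi Hpsi x y. rewrite Habs. apply psi_res_bound; auto. lra.
  - intros x Hx Hx0 HxPI HxmPI.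
    pose proof (gexpr_bound alpha x Ha (sin_neq0_on_period x Hx Hx0 HxPI HxmPI)) as Hg.
    assert (0 <= sqrt (Rabs (alpha - 1)) * Rabs x * Rpower (Rabs (sin x)) (alpha - 1)).
    { apply Rmult_le_pos; [apply Rmult_le_pos|]; [apply sqrt_pos | apply Rabs_pos |].
      left. apply exp_pos. }
    nra.
Qed.
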